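(* Let $\mathcal{A}=(Q,\delta,s)$ be a quasi-Wheeler NFA (satisfying the standing assumptions below), let $\mathcal{P}'$ be its coarsest forward-stable partition and $\mathcal{A}'=\mathcal{A}/_{\mathcal{P}'}$ the quotient automaton. Run the Ordered Partition Refinement algorithm described below on $\mathcal{A}$. Then at any step of the algorithm, the current ordered partition $\mathcal{P}=\langle Q_1,\dots,Q_k\rangle$ agrees with every Wheeler order $\prec$ of $\mathcal{A}'$: if $i<j$, $u\in Q_i$ and $v\in Q_j$, then $[u]_{\mathcal{P}'}\prec[v]_{\mathcal{P}'}$ for every Wheeler order $\prec$ of $\mathcal{A}'$.
   Context: $\Sigma=\{a_1<\dots<a_k\}$ is a finite totally ordered alphabet. NFA $\mathcal{A}=(Q,\delta,s)$, $\delta:Q\times\Sigma\to2^Q$, $\delta_a(u)=\delta(u,a)$, $\delta_a(T)=\bigcup_{u\in T}\delta_a(u)$. Standing assumptions: $s$ has no incoming transitions, every state is reachable from $s$, every $v\neq s$ has incoming transitions labeled by exactly one letter $\lambda(v)$, and every letter labels some transition. A partition of $Q$ is forward-stable if for any parts $S,T$ and every $a$, $S\subseteq\delta_a(T)$ or $S\cap\delta_a(T)=\emptyset$; the coarsest one is the forward-stable partition with fewest parts. For a partition $\mathcal{P}'$, $[u]_{\mathcal{P}'}$ is the part containing $u$, and the quotient NFA $\mathcal{A}/_{\mathcal{P}'}$ has the parts as states, source $[s]$, and $[v]\in\delta'_a([u])$ iff some $v'\in[v]$ lies in $\delta_a(u')$ for some $u'\in[u]$. A Wheeler order of an NFA $(Q,\delta,s)$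 is a strict total order $\prec$ on $Q$ with $s\prec v$ for $v\neq s$ such that for all $v\in\delta_a(u)$, $v'\in\delta_{a'}(u')$: if $a<a'$ then $v\prec v'$; if $a=a'$, $u\prec u'$, $v\neq v'$ then $v\prec v'$. A total preorder $\preceq$ on $Q$ is a Wheeler preorder if its equivalence classes form the coarsest forward-stable partition and the induced strict order on classes is a Wheeler order of the quotient; $\mathcal{A}$ is quasi-Wheeler if it has a Wheeler preorder. Algorithm (Ordered Partition Refinement): let $Q_\epsilon=\{s\}$, $Q_a=\{v:\lambda(v)=a\}$. Initialize $\mathcal{P}:=\langle Q_\epsilon,Q_{a_1},\dots,Q_{a_k}\rangle$, $\mathcal{X}:=\langle Q\rangle$. While $\mathcal{X}\neq\mathcal{P}$: let $S$ be the first part of $\mathcal{X}$ that is a union of at least two parts of $\mathcal{P}$; let $B$ be the smaller (in cardinality) of the first and last part of $\mathcal{P}$ contained in $S$; replace $S$ in $\mathcal{X}$ by $B,S\setminus B$ if $B$ was the first such part, else by $S\setminus B,B$. For each part $D$ of $\mathcal{P}$ present before this step, with $a=\lambda(D)$ (for $\{s\}$ take $D_1=\emptyset$): $D_1:=D\cap\delta_a(B)$, $D_2:=D\setminus D_1$, $D_{11}:=D_1\cap\delta_a(S\setminus B)$, $D_{12}:=D_1\setminus D_{11}$; replace $D$ by the nonempty sets among $D_{12},D_{11},D_2$ (in this order) if $B$ was first, else among $D_2,D_{11},D_{12}$ (in this order). Return $\mathcal{P}$. *)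

From mathcomp Require Import all_boot.
Set Implicit Arguments.
Unset Strict Implicit.
Unset Printing Implicit Defensive.

(* Alphabet Sigma = 'I_k = {a_1 < ... < a_k}, ordered by the natural order. *)

Section Wheeler.
Variable k : nat.

(* Wheeler order of an NFA whose states are the elements of D : {set T},
   with transition function d and source s0 (prec is only looked at on D). *)
Definition wheeler_order (T : finType) (D : {set T})
    (d : T -> 'I_k -> {set T}) (s0 : T) (prec : rel T) : Prop :=
  [/\ (forall x, x \in D -> ~~ prec x x),
      (forall x y z, x \in D -> y \in D -> z \in D ->
          prec x y -> prec y z -> prec x z),
      (forall x y, x \in D -> y \in D -> x != y -> prec x y || prec y x),
      (forall v, v \in D -> v != s0 -> prec s0 v) &
      (forall (u u' v v' : T) (a a' : 'I_k), u \in D -> u' \in D ->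
          v \in d u a -> v' \in d u' a' ->
          ((a < a')%N -> prec v v') /\
          (a = a' -> prec u u' -> v != v' -> prec v v'))].
End Wheeler.

Section NFA.
Variables (k : nat) (Q : finType) (delta : Q -> 'I_k -> {set Q}) (s : Q).

Definition dset (a : 'I_k) (T : {set Q}) : {set Q} := \bigcup_(u in T) delta u a.

Definition edge : rel Q := fun u v => [exists a, v \in delta u a].

Definition standing_assumptions : Prop :=
  [/\ (forall u a, s \notin delta u a),
      (forall v, connect edge s v),
      (forall v, v != s -> #|[set a | [exists u, v \in delta u a]]| = 1) &
      (forall a, exists u v, v \in delta u a)].

Definition forward_stable (P : {set {set Q}}) : Prop :=
  forall S T, S \in P -> T \in P -> forall a,
    S \subset dset a T \/ [disjoint S & dset a T].

Definition coarsest_fsp (P : {set {set Q}}) : Prop :=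
  [/\ partition P [set: Q], forward_stable P &
      forall P2 : {set {set Q}}, partition P2 [set: Q] -> forward_stable P2 ->
        #|P| <= #|P2| ].

(* Quotient NFA A/P: states are the parts of P, source [s]_P = pblock P s. *)
Definition qdelta (P : {set {set Q}}) (X : {set Q}) (a : 'I_k) : {set {set Q}} :=
  [set Y in P | [exists u in X, exists v in Y, v \in delta u a]].

Definition wheeler_order_quotient (P : {set {set Q}}) (prec : rel {set Q}) : Prop :=
  wheeler_order P (qdelta P) (pblock P s) prec.

Definition pre_classes (le : rel Q) : {set {set Q}} :=
  [set [set y | le x y && le y x] | x : Q].

Definition induced_strict (le : rel Q) : rel {set Q} :=
  fun X Y => [exists x in X, exists y in Y, le x y && ~~ le y x].

Definition wheeler_preorder (le : rel Q) : Prop :=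
  [/\ reflexive le, transitive le, total le,
      coarsest_fsp (pre_classes le) &
      wheeler_order_quotient (pre_classes le) (induced_strict le)].

Definition quasi_wheeler : Prop := exists le : rel Q, wheeler_preorder le.

(* lambda(v): the unique letter labelling incoming edges (None for s). *)
Definition lab (v : Q) : option 'I_k := [pick a | [exists u, v \in delta u a]].

(* lambda(D) for a part D (all its elements share the label). *)
Definition plab (D : {set Q}) : option 'I_k :=
  if [pick x in D] is Some x then lab x else None.

(* delta_{lambda(D)}(T), and the empty set when D = {s} *)
Definition dlab (D T : {set Q}) : {set Q} :=
  if plab D is Some a then dset a T else set0.

Definition opr_state := (seq {set Q} * seq {set Q})%type.

Definition opr_init : opr_state :=
  ([set s] :: [seq [set v | lab v == Some a] | a <- enum 'I_k], [:: [set: Q]]).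

Definition multi (P : seq {set Q}) (S : {set Q}) : bool :=
  (\bigcup_(D <- P | (D : {set Q}) \subset S) D == S) && (1 < count (fun D : {set Q} => D \subset S) P).

Definition split_part (bfirst : bool) (B S D : {set Q}) : seq {set Q} :=
  let D1 := D :&: dlab D B in
  let D2 := D :\: D1 in
  let D11 := D1 :&: dlab D (S :\: B) in
  let D12 := D1 :\: D11 in
  filter (fun E => E != set0)
    (if bfirst then [:: D12; D11; D2] else [:: D2; D11; D12]).

(* One iteration of the while loop; bfirst records whether B is the first
   part of P contained in S (ties in cardinality: either choice allowed). *)
Definition opr_step (st st' : opr_state) : Prop :=
  let: (P, X) := st in
  exists bfirst : bool,
    let i := find (multi P) X in
    let S := nth set0 X i in
    let C := filter (fun D : {set Q} => D \subset S) P in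
    let F := head set0 C in
    let L := last set0 C in
    let B := if bfirst then F else L in
    [/\ X != P, i < size X,
        (if bfirst then #|F| <= #|L| else #|L| <= #|F|) &
        st' = (flatten [seq split_part bfirst B S D | D <- P],
               take i X ++ (if bfirst then [:: B; S :\: B] else [:: S :\: B; B])
                        ++ drop i.+1 X)].

Inductive opr_reach : opr_state -> Prop :=
  | opr_reach_init : opr_reach opr_init
  | opr_reach_step st st' : opr_reach st -> opr_step st st' -> opr_reach st'.

End NFA.

From Pilot Require Import Defs.
From mathcomp Require Import all_boot.

Set Implicit Arguments.
Unset Strict Implicit.
Unset Printing Implicit Defensive.

(* Call a set of states saturated if it is a union of classes of P'. Since P'
   is forward-stable, delta_a maps saturated sets to saturated sets, so states
   separated by such a set lie in different classes.  The algorithm maintains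
   that P is a partition of Q into label-uniform saturated parts, that every
   part of X is saturated and a union of parts of P, that every part of P is
   stable with respect to every part of X, and that for parts D before E in P
   every class meeting D precedes every class meeting E.  Initially the last
   property is the Wheeler axiom for the source and for distinct letters.  In a
   refinement step B is the first (resp. last) part of P inside S, so the
   classes of B precede (resp. follow) those of S \ B; in a part D with letter
   a, the Wheeler axiom for equal letters then orders the states reached only
   from B, from both B and S \ B, and only from S \ B, as split_part does. *)

Section SeqLemmas.
Variable T : eqType.

Lemma split_head_filter (p : pred T) x0 (s : seq T) : has p s ->
  exists s1 s2, [/\ s = s1 ++ head x0 (filter p s) :: s2, ~~ has p s1
                  & p (head x0 (filter p s))].
Proof.
elim: s => //= x s IH; case px: (p x) => /=.
  by move=> _; exists [::], s; rewrite px.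
case/IH => s1 [s2 [E ns1 pB]]; exists (x :: s1), s2.
by rewrite /= px {1}E.
Qed.

Lemma split_last_filter (p : pred T) x0 (s : seq T) : has p s ->
  exists s1 s2, [/\ s = s1 ++ last x0 (filter p s) :: s2, ~~ has p s2
                  & p (last x0 (filter p s))].
Proof.
elim/last_ind: s => //= s x IH; rewrite filter_rcons has_rcons.
case px: (p x) => /=.
  by move=> _; exists s, [::]; rewrite last_rcons cats1.
case/IH => s1 [s2 [E ns2 pB]]; exists s1, (rcons s2 x).
by rewrite has_rcons px {1}E rcons_cat.
Qed.

Lemma mem_splice (s t : seq T) i x :
  x \in take i s ++ t ++ drop i.+1 s -> x \in s \/ x \in t.
Proof. by rewrite !mem_cat => /or3P[/mem_take||/mem_drop]; auto. Qed.

Lemma pairwise_flatten_map (r : rel T) (f : T -> seq T) (s : seq T) :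
  (forall x y, r x y -> allrel r (f x) (f y)) ->
  {in s, forall x, pairwise r (f x)} -> pairwise r s ->
  pairwise r (flatten (map f s)).
Proof.
move=> rf; elim: s => //= x s IH fs /andP[rxs rs].
have fs' : {in s, forall y, pairwise r (f y)}.
  by move=> y ys; rewrite fs // inE ys orbT.
rewrite pairwise_cat (fs x (mem_head x s)) (IH fs' rs) !andbT.
apply/allrelP => x' y' x'f /flatten_mapP[y ys y'f].
exact: (allrelP (rf _ _ (allP rxs y ys))).
Qed.

End SeqLemmas.

Section Automaton.
Variables (k : nat) (Q : finType) (delta : Q -> 'I_k -> {set Q}) (s : Q).
Hypothesis std : standing_assumptions delta s.

Local Notation dset := (dset delta).
Local Notation lab := (lab delta).

Lemma dsetS a (A B : {set Q}) : A \subset B -> dset a A \subset dset a B.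
Proof.
move=> AB; apply/subsetP => x /bigcupP[u uA xu]; apply/bigcupP; exists u => //.
exact: (subsetP AB).
Qed.

Lemma dset_setD a (A B : {set Q}) x :
  x \in dset a A -> x \notin dset a B -> x \in dset a (A :\: B).
Proof.
case/bigcupP => u uA xu xB; apply/bigcupP; exists u => //; rewrite inE uA andbT.
by apply: contra xB => uB; apply/bigcupP; exists u.
Qed.

Lemma source_notin_dset a T : s \notin dset a T.
Proof. by case: std => src _ _ _; apply/bigcupP => -[u _]; apply/negP/src. Qed.

Lemma lab_dset a T v : v \in dset a T -> lab v = Some a.
Proof.
move=> vT; have vs : v != s by apply: contraTneq vT => ->; apply: source_notin_dset.
case/bigcupP: vT => u _ vu; case: std => _ _ uniq _.
have [b eb] := cards1P (introT eqP (uniq v vs)).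
have lab_b c : [exists u, v \in delta u c] -> c = b.
  by move=> h; apply/set1P; rewrite -eb inE.
rewrite /Defs.lab; case: pickP => [c /lab_b -> | /(_ a)/existsP[]]; last by exists u.
by rewrite (@lab_b a) //; apply/existsP; exists u.
Qed.

Lemma lab_source : lab s = None.
Proof.
rewrite /Defs.lab; case: pickP => // a /existsP[u su].
have /negP[] := source_notin_dset a [set: Q].
by apply/bigcupP; exists u; rewrite ?inE.
Qed.

Lemma lab_class a : [set v | lab v == Some a] = dset a [set: Q].
Proof.
apply/setP => v; rewrite inE; apply/eqP/idP => [|/lab_dset //].
rewrite /Defs.lab; case: pickP => // c /existsP[u vu] [<-].
by apply/bigcupP; exists u; rewrite ?inE.
Qed.

Lemma dset_pred v : v != s -> exists a, v \in dset a [set: Q].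
Proof.
move=> vs; case: std => _ reach _ _.
case/connectP: (reach v) => p; case/lastP: p => [_ /= E|p z].
  by rewrite E eqxx in vs.
rewrite rcons_path last_rcons => /andP[_ /existsP[a za]] ->.
by exists a; apply/bigcupP; exists (last s p); rewrite ?inE.
Qed.

Lemma plab_uniform (D : {set Q}) x :
  {in D &, forall x y, lab x = lab y} -> x \in D -> plab delta D = lab x.
Proof.
by move=> uD xD; rewrite /plab; case: pickP => [y yD|/(_ x)]; [apply: uD | rewrite xD].
Qed.

Lemma dlab_dset (D T : {set Q}) a x :
  {in D &, forall x y, lab x = lab y} -> x \in D -> x \in dset a T ->
  dlab delta D =1 dset a.
Proof. by move=> uD xD /lab_dset xa U; rewrite /dlab (plab_uniform uD xD) xa. Qed.

Lemma split_partE b (B S D : {set Q}) :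
  let dB := dlab delta D B in let dSB := dlab delta D (S :\: B) in
  split_part delta b B S D =
  filter (fun E => E != set0)
    (if b then [:: D :&: dB :\: dSB; D :&: dB :&: dSB; D :\: dB]
     else [:: D :\: dB; D :&: dB :&: dSB; D :&: dB :\: dSB]).
Proof.
move=> dB dSB; have E12 : D :&: dB :\: (D :&: dB :&: dSB) = D :&: dB :\: dSB.
  by apply/setP => y; rewrite !inE; case: (y \in D); case: (y \in dB); case: (y \in dSB).
have E2 : D :\: (D :&: dB) = D :\: dB.
  by apply/setP => y; rewrite !inE; case: (y \in D); case: (y \in dB).
by rewrite /split_part E12 E2.
Qed.

Lemma split_partP b (B S D D' : {set Q}) : D' \in split_part delta b B S D ->
  [\/ D' = D :&: dlab delta D B :\: dlab delta D (S :\: B),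
      D' = D :&: dlab delta D B :&: dlab delta D (S :\: B) |
      D' = D :\: dlab delta D B].
Proof.
rewrite split_partE mem_filter => /andP[_].
case: b; rewrite !inE => /or3P[]/eqP->; by [apply: Or31 | apply: Or32 | apply: Or33].
Qed.

Lemma split_part_sub b (B S D D' : {set Q}) :
  D' \in split_part delta b B S D -> D' \subset D.
Proof.
by case/split_partP => ->; apply/subsetP => y; rewrite !inE; case: (y \in D); rewrite ?andbF.
Qed.

Lemma split_part_cover b (B S D : {set Q}) y : y \in D ->
  exists2 D', D' \in split_part delta b B S D & y \in D'.
Proof.
set dB := dlab delta D B; set dSB := dlab delta D (S :\: B).
move=> yD; suff [E yE Ep] : exists2 E : {set Q},
    y \in E & E \in [:: D :&: dB :\: dSB; D :&: dB :&: dSB; D :\: dB].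
  exists E => //; rewrite split_partE mem_filter; apply/andP; split.
    by apply/set0Pn; exists y.
  by case: b; move: Ep; rewrite !inE => /or3P[]->; rewrite ?orbT.
have [yB|yB] := boolP (y \in dB); last by exists (D :\: dB); rewrite ?inE ?yD ?yB ?eqxx ?orbT.
have [ySB|ySB] := boolP (y \in dSB).
  by exists (D :&: dB :&: dSB); rewrite ?inE ?yD ?yB ?ySB ?eqxx ?orbT.
by exists (D :&: dB :\: dSB); rewrite ?inE ?yD ?yB ?ySB ?eqxx.
Qed.

Lemma split_part_disjoint b (B S D D' E' : {set Q}) y :
  D' \in split_part delta b B S D -> E' \in split_part delta b B S D ->
  y \in D' -> y \in E' -> D' = E'.
Proof.
by case/split_partP => ->; case/split_partP => ->; rewrite !inE //;
  case: (y \in D); case: (y \in dlab delta D B); case: (y \in dlab delta D (S :\: B)).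
Qed.

Lemma split_part_stable b B S (D D' : {set Q}) a :
  {in D &, forall x y, lab x = lab y} ->
  {in D &, forall x z, x \in dset a S -> z \in dset a S} ->
  D' \in split_part delta b B S D ->
  {in D' &, forall x z, x \in dset a B -> z \in dset a B} /\
  {in D' &, forall x z, x \in dset a (S :\: B) -> z \in dset a (S :\: B)}.
Proof.
move=> uD stD D'D; have D'sub := subsetP (split_part_sub D'D).
split=> x z xD' zD' xa; have xD := D'sub x xD'; have zD := D'sub z zD';
  have dl := dlab_dset uD xD xa; move: xD' zD'.
  case/split_partP: D'D => ->; rewrite !inE !dl xa ?andbF //= => _;
  by case: (z \in dset a B); rewrite ?andbF ?andFb.
have zS : z \in dset a S by apply: stD xD zD (subsetP (dsetS a (subsetDl S B)) x xa).
case/split_partP: D'D => ->; rewrite !inE !dl ?xa ?andbF //= => _.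
  by case: (z \in dset a (S :\: B)); rewrite ?andbF.
by case/andP=> zB _; apply: dset_setD.
Qed.

Lemma mem_refined_X b i (X : seq {set Q}) (S B S' : {set Q}) :
  S' \in take i X ++ (if b then [:: B; S :\: B] else [:: S :\: B; B]) ++ drop i.+1 X ->
  [\/ S' \in X, S' = B | S' = S :\: B].
Proof.
case/mem_splice => [|]; first exact: Or31.
case: b; rewrite !inE => /orP[]/eqP->; by [apply: Or32 | apply: Or33].
Qed.

Section Saturation.
Variable P' : {set {set Q}}.
Hypotheses (partP' : partition P' [set: Q]) (stableP' : forward_stable delta P').
Local Notation cls := (pblock P').

Lemma mem_pblockT x : x \in cls x.
Proof. by rewrite mem_pblock (cover_partition partP') inE. Qed.

Lemma pblockT_mem x : cls x \in P'.
Proof. by rewrite pblock_mem // (cover_partition partP') inE. Qed.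

Definition saturated (T : {set Q}) :=
  forall x y, cls x = cls y -> (x \in T) = (y \in T).

Lemma saturatedT : saturated [set: Q].
Proof. by move=> x y _; rewrite !inE. Qed.

Lemma saturatedI A B : saturated A -> saturated B -> saturated (A :&: B).
Proof. by move=> sA sB x y e; rewrite !inE (sA x y) ?(sB x y). Qed.

Lemma saturatedD A B : saturated A -> saturated B -> saturated (A :\: B).
Proof. by move=> sA sB x y e; rewrite !inE (sA x y) ?(sB x y). Qed.

Lemma saturated_dset a T : saturated T -> saturated (dset a T).
Proof.
move=> sT; suff dT x y : cls x = cls y -> x \in dset a T -> y \in dset a T.
  by move=> x y e; apply/idP/idP; apply: dT.
move=> e /bigcupP[u uT xu].
have [sub|dis] := stableP' (pblockT_mem y) (pblockT_mem u) a.
  have /bigcupP[u' u'u yu'] := subsetP sub y (mem_pblockT y).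
  apply/bigcupP; exists u' => //; rewrite -(sT u) //.
  by rewrite (same_pblock (partition_trivIset partP') u'u).
have : x \in cls y :&: dset a (cls u).
  by rewrite inE -e mem_pblockT; apply/bigcupP; exists u => //; apply: mem_pblockT.
by rewrite (disjoint_setI0 dis) inE.
Qed.

Lemma saturated_dlab D T : saturated T -> saturated (dlab delta D T).
Proof.
move=> sT; rewrite /dlab; case: (plab delta D) => [a|]; first exact: saturated_dset.
by move=> x y; rewrite !inE.
Qed.

Lemma saturated_pblock_neq T x y : saturated T -> x \in T -> y \notin T -> cls x != cls y.
Proof. by move=> sT xT; apply: contra => /eqP/sT <-. Qed.

Lemma pblock_source y : cls y = cls s -> y = s.
Proof.
move=> e; apply/eqP; apply: contraT => /dset_pred[a ya].
by move: (source_notin_dset a [set: Q]); rewrite -(saturated_dset a saturatedT e) ya.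
Qed.

Section WheelerOrder.
Variable prec : rel {set Q}.
Hypothesis wheeler : wheeler_order_quotient delta s P' prec.

Lemma qdelta_pblock u v a : v \in delta u a -> cls v \in qdelta delta P' (cls u) a.
Proof.
move=> vu; rewrite inE pblockT_mem; apply/exists_inP; exists u; first exact: mem_pblockT.
by apply/exists_inP; exists v => //; apply: mem_pblockT.
Qed.

Lemma prec_source v : v != s -> prec (cls s) (cls v).
Proof.
case: wheeler => _ _ _ src _ vs; apply: src; first exact: pblockT_mem.
by apply: contra vs => /eqP/pblock_source ->.
Qed.

Lemma prec_dset_ltn (a b : 'I_k) x y : (a < b)%N ->
  x \in dset a [set: Q] -> y \in dset b [set: Q] -> prec (cls x) (cls y).
Proof.
move=> ab /bigcupP[u _ xu] /bigcupP[v _ yv]; case: wheeler => _ _ _ _ mono.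
have [lt _] := mono _ _ _ _ a b (pblockT_mem u) (pblockT_mem v)
  (qdelta_pblock xu) (qdelta_pblock yv).
exact: lt ab.
Qed.

Definition before (D E : {set Q}) : bool :=
  [forall u in D, forall v in E, prec (cls u) (cls v)].

Lemma beforeP (D E : {set Q}) :
  reflect (forall u v, u \in D -> v \in E -> prec (cls u) (cls v)) (before D E).
Proof.
apply: (iffP forall_inP) => [h u v /h/forall_inP|h u uD]; first exact.
by apply/forall_inP => v; apply: h.
Qed.

Lemma before_subset (D E D' E' : {set Q}) :
  D' \subset D -> E' \subset E -> before D E -> before D' E'.
Proof.
move=> /subsetP D'D /subsetP E'E /beforeP DE; apply/beforeP => u v /D'D uD /E'E vE.
exact: DE.
Qed.

Lemma before0l (E : {set Q}) : before set0 E.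
Proof. by apply/beforeP => u v; rewrite inE. Qed.

Lemma before0r (D : {set Q}) : before D set0.
Proof. by apply/beforeP => u v _; rewrite inE. Qed.

Lemma before_dset (L H : {set Q}) a x y : before L H ->
  x \in dset a L -> y \in dset a H -> cls x != cls y -> prec (cls x) (cls y).
Proof.
move=> /beforeP LH /bigcupP[u uL xu] /bigcupP[v vH yv] xy; case: wheeler => _ _ _ _ mono.
have [_ same] := mono _ _ _ _ a a (pblockT_mem u) (pblockT_mem v)
  (qdelta_pblock xu) (qdelta_pblock yv).
exact: same erefl (LH u v uL vH) xy.
Qed.

Lemma before_pieces (L H : {set Q}) a (A1 A2 A3 : {set Q}) :
  saturated L -> saturated H -> before L H ->
  A1 \subset dset a L :\: dset a H -> A2 \subset dset a L :&: dset a H ->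
  A3 \subset dset a H :\: dset a L -> pairwise before [:: A1; A2; A3].
Proof.
move=> /(saturated_dset a) sL /(saturated_dset a) sH LH.
have prec_sep x y : x \in dset a L -> y \in dset a H ->
    (x \notin dset a H) || (y \notin dset a L) -> prec (cls x) (cls y).
  move=> xL yH /orP[xH|yL]; apply: (before_dset LH xL yH).
    by rewrite eq_sym; apply: saturated_pblock_neq sH yH xH.
  exact: saturated_pblock_neq sL xL yL.
move=> /subsetP h1 /subsetP h2 /subsetP h3; rewrite /= !andbT -andbA; apply/and3P; split.
- apply/beforeP => x y /h1/setDP[xL xH] /h2/setIP[_ yH].
  by apply: prec_sep; rewrite ?xH.
- apply/beforeP => x y /h1/setDP[xL xH] /h3/setDP[yH _].
  by apply: prec_sep; rewrite ?xH.
- apply/beforeP => x y /h2/setIP[xL _] /h3/setDP[yH yL].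
  by apply: prec_sep; rewrite ?yL ?orbT.
Qed.

Lemma split_part_sorted b (B S D : {set Q}) :
  saturated B -> saturated (S :\: B) -> B \subset S ->
  before (if b then B else S :\: B) (if b then S :\: B else B) ->
  (forall a, {in D &, forall x z, x \in dset a S -> z \in dset a S}) ->
  pairwise before (split_part delta b B S D).
Proof.
move=> sB sSB BS LH stD; rewrite split_partE; apply: pairwise_filter.
have [D1_0 | [x]] := set_0Vmem (D :&: dlab delta D B).
  by rewrite D1_0 set0I set0D; case: b {LH} => /=; rewrite ?before0l ?before0r.
rewrite /dlab; case: (plab delta D) => [a|]; last by rewrite setI0 inE.
case/setIP => xD xB.
have DS : D \subset dset a S.
  by apply/subsetP => z zD; apply: (stD a x z xD zD); apply: (subsetP (dsetS a BS)).
case: b LH => LH;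
  [apply: (before_pieces (a := a) sB sSB LH) | apply: (before_pieces (a := a) sSB sB LH)];
  apply/subsetP => y; rewrite !inE; try by case: (y \in D); case: (y \in dset a B);
  case: (y \in dset a (S :\: B)).
all: by move=> /andP[yB /(subsetP DS) yS]; rewrite yB dset_setD.
Qed.

Record opr_inv (P X : seq {set Q}) : Prop := {
  inv_cover : forall y, exists2 D, D \in P & y \in D;
  inv_disjoint : forall D E y, D \in P -> E \in P -> y \in D -> y \in E -> D = E;
  inv_label : forall D, D \in P -> {in D &, forall x y, lab x = lab y};
  inv_saturatedP : forall D, D \in P -> saturated D;
  inv_saturatedX : forall S, S \in X -> saturated S;
  inv_nested : forall D S y, D \in P -> S \in X -> y \in D -> y \in S -> D \subset S;
  inv_stable : forall D S a, D \in P -> S \in X ->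
    {in D &, forall x z, x \in dset a S -> z \in dset a S};
  inv_sorted : pairwise before P }.

Lemma opr_init_parts D :
  D \in [set s] :: [seq [set v | lab v == Some a] | a <- enum 'I_k] ->
  D = [set s] \/ exists a, D = dset a [set: Q].
Proof.
by rewrite in_cons => /orP[/eqP->|/mapP[a _ ->]]; [left | right; exists a; apply: lab_class].
Qed.

Lemma opr_inv_init : opr_inv (opr_init delta s).1 (opr_init delta s).2.
Proof.
split=> /=.
- move=> y; case: (eqVneq y s) => [->|/dset_pred[a ya]].
    by exists [set s]; rewrite ?mem_head ?set11.
  exists [set v | lab v == Some a]; last by rewrite lab_class.
  by rewrite in_cons map_f ?orbT ?mem_enum.
- move=> D E y /opr_init_parts[->|[a ->]] /opr_init_parts[->|[b ->]] //.
  + by move=> /set1P->; rewrite (negbTE (source_notin_dset _ _)).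
  + by move=> ya /set1P ys; move: ya; rewrite ys (negbTE (source_notin_dset _ _)).
  + by move=> /lab_dset ya /lab_dset; rewrite ya => -[->].
- move=> D /opr_init_parts[->|[a ->]] x y.
    by move=> /set1P-> /set1P->.
  by move=> /lab_dset-> /lab_dset->.
- move=> D /opr_init_parts[->|[a ->]]; last exact: saturated_dset saturatedT.
  move=> x y e; rewrite !inE; apply/eqP/eqP => [xs|ys]; apply: pblock_source.
    by rewrite -e xs.
  by rewrite e ys.
- by move=> S /[!inE] /eqP->; apply: saturatedT.
- by move=> D S y _ /[!inE] /eqP->; rewrite subsetT.
- move=> D S a /opr_init_parts[->|[b ->]] /[!inE] /eqP-> x z.
    by move=> /set1P-> /set1P->.
  move=> xb zb xa; have : Some b = Some a by rewrite -(lab_dset xb) (lab_dset xa).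
  by case=> <-.
- rewrite pairwise_map; apply/andP; split.
    apply/allP => D /mapP[a _ ->]; apply/beforeP => u v /set1P-> /[!inE] /eqP lv.
    by apply: prec_source; apply: contra_eq_neq lv => ->; rewrite lab_source.
  have : pairwise (relpre val ltn) (enum 'I_k).
    by rewrite -pairwise_map val_enum_ord -sorted_pairwise ?iota_ltn_sorted //; apply: ltn_trans.
  apply: sub_pairwise => a b /= ab; apply/beforeP => u v; rewrite !lab_class.
  exact: prec_dset_ltn.
Qed.

Lemma before_first P X (S B : {set Q}) s1 s2 : opr_inv P X -> S \in X ->
  P = s1 ++ B :: s2 -> ~~ has (fun D : {set Q} => D \subset S) s1 -> before B (S :\: B).
Proof.
move=> I SX EP ns1; apply/beforeP => p q pB /setDP[qS qB].
have [D DP qD] := inv_cover I q; have DS := inv_nested I DP SX qD qS.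
move: (inv_sorted I) DP; rewrite EP pairwise_cat /= mem_cat in_cons.
case/and3P => _ _ /andP[/allP Bs2 _] /or3P[Ds1|/eqP DB|Ds2].
- by move/hasP: ns1; case; exists D.
- by rewrite -DB qD in qB.
- by move/beforeP: (Bs2 D Ds2); apply.
Qed.

Lemma before_last P X (S B : {set Q}) s1 s2 : opr_inv P X -> S \in X ->
  P = s1 ++ B :: s2 -> ~~ has (fun D : {set Q} => D \subset S) s2 -> before (S :\: B) B.
Proof.
move=> I SX EP ns2; apply/beforeP => q p /setDP[qS qB] pB.
have [D DP qD] := inv_cover I q; have DS := inv_nested I DP SX qD qS.
move: (inv_sorted I) DP; rewrite EP pairwise_cat /= mem_cat in_cons.
case/and3P => /allrelP s1B _ _ /or3P[Ds1|/eqP DB|Ds2].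
- by move/beforeP: (s1B D B Ds1 (mem_head _ _)); apply.
- by rewrite -DB qD in qB.
- by move/hasP: ns2; case; exists D.
Qed.

Lemma opr_inv_refine P X b i (S B : {set Q}) :
  opr_inv P X -> S \in X -> B \in P -> B \subset S ->
  before (if b then B else S :\: B) (if b then S :\: B else B) ->
  opr_inv (flatten [seq split_part delta b B S D | D <- P])
          (take i X ++ (if b then [:: B; S :\: B] else [:: S :\: B; B]) ++ drop i.+1 X).
Proof.
move=> I SX BP BS LH.
have sB := inv_saturatedP I BP; have sSB := saturatedD (inv_saturatedX I SX) sB.
have memX := @mem_refined_X b i X S B.
split.
- move=> y; have [D DP yD] := inv_cover I y; have [D' D'D yD'] := split_part_cover b B S yD.
  by exists D' => //; apply/flatten_mapP; exists D.
- move=> D' E' y /flatten_mapP[D DP D'D] /flatten_mapP[E EP E'E] yD' yE'.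
  have DE : D = E.
    apply: (inv_disjoint I DP EP (subsetP (split_part_sub D'D) y yD')).
    exact: (subsetP (split_part_sub E'E) y yE').
  by rewrite -DE in E'E; apply: split_part_disjoint D'D E'E yD' yE'.
- move=> D' /flatten_mapP[D DP /split_part_sub/subsetP D'D] x y /D'D xD /D'D yD.
  exact: (inv_label I DP xD yD).
- move=> D' /flatten_mapP[D DP D'D]; have sD := inv_saturatedP I DP.
  have sdB := saturated_dlab D sB; have sdSB := saturated_dlab D sSB.
  by case/split_partP: D'D => ->; do ?[apply: saturatedD | apply: saturatedI].
- by move=> S' /memX[/(inv_saturatedX I)| -> | ->].
- move=> D' S' y /flatten_mapP[D DP D'D] /memX; have /subsetP D'sub := split_part_sub D'D.
  move=> hS' /D'sub yD yS'; apply/subsetP => z /D'sub zD.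
  case: hS' yS' => [S'X yS'|->|->].
  + exact: subsetP (inv_nested I DP S'X yD yS') z zD.
  + by move=> yB; rewrite -(inv_disjoint I DP BP yD yB).
  + case/setDP=> yS yB; rewrite inE (subsetP (inv_nested I DP SX yD yS)) // andbT.
    by apply: contra yB => zB; rewrite -(inv_disjoint I DP BP zD zB).
- move=> D' S' a /flatten_mapP[D DP D'D].
  have [stB stSB] := split_part_stable (inv_label I DP) (inv_stable I (a := a) DP SX) D'D.
  case/memX => [S'X | -> | ->] //; have /subsetP D'sub := split_part_sub D'D.
  by move=> x z /D'sub xD /D'sub zD; apply: (inv_stable I DP S'X).
- apply: pairwise_flatten_map (inv_sorted I).
    move=> D E DE; apply/allrelP => D' E' /split_part_sub D'D /split_part_sub E'E.
    exact: before_subset D'D E'E DE.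
  move=> D DP; apply: split_part_sorted sB sSB BS LH _.
  by move=> a; apply: (inv_stable I DP SX).
Qed.

Lemma opr_inv_step P X P1 X1 :
  opr_inv P X -> opr_step delta (P, X) (P1, X1) -> opr_inv P1 X1.
Proof.
move=> I [b] /= [_ iX _ [-> ->]].
set S := nth set0 X (find (multi P) X).
have SX : S \in X by apply: mem_nth.
have hasS : has (fun D : {set Q} => D \subset S) P.
  have /andP[_] : multi P S by apply: nth_find; rewrite has_find.
  by rewrite has_count; apply: ltn_trans.
case: b.
- have [s1 [s2 [EP ns1 BS]]] := split_head_filter set0 hasS.
  apply: opr_inv_refine => //; first by rewrite [X in _ \in X]EP mem_cat mem_head orbT.
  exact: before_first I SX EP ns1.
- have [s1 [s2 [EP ns2 BS]]] := split_last_filter set0 hasS.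
  apply: opr_inv_refine => //; first by rewrite [X in _ \in X]EP mem_cat mem_head orbT.
  exact: before_last I SX EP ns2.
Qed.

Lemma opr_reach_inv st : opr_reach delta s st -> opr_inv st.1 st.2.
Proof.
elim=> [|[P X] [P1 X1] _ IH]; first exact: opr_inv_init.
exact: opr_inv_step IH.
Qed.

End WheelerOrder.
End Saturation.
End Automaton.

Theorem lemma11 (k : nat) (Q : finType) (delta : Q -> 'I_k -> {set Q}) (s : Q) :
  standing_assumptions delta s ->
  quasi_wheeler delta s ->
  forall P' : {set {set Q}}, coarsest_fsp delta P' ->
  forall (P X : seq {set Q}), opr_reach delta s (P, X) ->
  forall (i j : nat), i < j -> j < size P ->
  forall u v : Q, u \in nth set0 P i -> v \in nth set0 P j ->
  forall prec : rel {set Q}, wheeler_order_quotient delta s P' prec ->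
    prec (pblock P' u) (pblock P' v).
Proof.
move=> std _ P' [partP' stableP' _] P X reach i j ij jP u v uPi vPj prec wheeler.
have /(pairwiseP set0) sorted := inv_sorted (opr_reach_inv std partP' stableP' wheeler reach).
have := sorted i j; rewrite !inE => /(_ (ltn_trans ij jP) jP ij) /beforeP; exact.
Qed.
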